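(* Let $N\ge1$, and let $q,\gamma\ne0,s_0,\xi_0\ne0$ and $u_1,\dots,u_N,v_1,\dots,v_N$ be generic complex numbers. Define $$\mathsf Z(u,v)=\frac{(1-\gamma)(q-\gamma^{-1}s_0^2)(1-uv)+(1-q)(1-\xi_0s_0u)(1-\xi_0^{-1}s_0v)}{(1-uv)(1-quv)},$$ $$\mathsf M_i(v)=\xi_0^{2i-N}v^{N-i-1}\Big\{(1-s_0\xi_0^{-1}v)(v\xi_0^{-1}-s_0)\prod_{l=1}^N\frac{1-qvu_l}{1-vu_l}-\gamma^{-1}q^{N-i}(\gamma-s_0\xi_0^{-1}v)(\gamma qv\xi_0^{-1}-s_0)\Big\},$$ $$\widetilde{\mathsf M}_i(u)=u^{N-i-1}\Big\{(1-s_0\xi_0u)(u-s_0/\xi_0)\prod_{l=1}^N\frac{1-quv_l}{1-uv_l}-\gamma^{-1}q^{N-i}(\gamma-s_0\xi_0u)(\gamma qu-s_0/\xi_0)\Big\}.$$ Then $$\frac{\prod_{i,j=1}^N(1-qu_iv_j)}{\prod_{1\le i<j\le N}(u_i-u_j)(v_i-v_j)}\det\big[\mathsf Z(u_i,v_j)\big]_{i,j=1}^N=\frac{\det[\mathsf M_i(v_j)]_{i,j=1}^N}{\prod_{1\le i<j\le N}(v_i-v_j)}=\frac{\det[\widetilde{\mathsf M}_i(u_j)]_{i,j=1}^N}{\prod_{1\le i<j\le N}(u_i-u_j)}.$$ *)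

From mathcomp Require Import all_boot all_algebra.
From mathcomp Require Import Rstruct complex.
Set Implicit Arguments. Unset Strict Implicit. Unset Printing Implicit Defensive.
Import GRing.Theory Num.Theory.
Local Open Scope ring_scope.

Notation C := (Rdefinitions.R[i]).

Definition Zfun (q gamma s0 xi0 u v : C) : C :=
  ((1 - gamma) * (q - gamma^-1 * s0 ^+ 2) * (1 - u * v)
   + (1 - q) * (1 - xi0 * s0 * u) * (1 - xi0^-1 * s0 * v))
  / ((1 - u * v) * (1 - q * u * v)).

(* M_i(v), for the paper's index i in 1..N (integer exponents) *)
Definition Mfun (N : nat) (q gamma s0 xi0 : C) (u : 'I_N -> C) (i : nat) (v : C) : C :=
  xi0 ^ (2 * (i : int) - (N : int)) * v ^ ((N : int) - (i : int) - 1) *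
  ((1 - s0 * xi0^-1 * v) * (v * xi0^-1 - s0) *
     \prod_(l < N) ((1 - q * v * u l) / (1 - v * u l))
   - gamma^-1 * q ^+ (N - i) * (gamma - s0 * xi0^-1 * v) * (gamma * q * v * xi0^-1 - s0)).

Definition Mtfun (N : nat) (q gamma s0 xi0 : C) (v : 'I_N -> C) (i : nat) (u : C) : C :=
  u ^ ((N : int) - (i : int) - 1) *
  ((1 - s0 * xi0 * u) * (u - s0 / xi0) *
     \prod_(l < N) ((1 - q * u * v l) / (1 - u * v l))
   - gamma^-1 * q ^+ (N - i) * (gamma - s0 * xi0 * u) * (gamma * q * u - s0 / xi0)).

Definition vandprod (N : nat) (x : 'I_N -> C) : C :=
  \prod_(i < N) \prod_(j < N | (i < j)%N) (x i - x j).

From mathcomp Require Import all_boot all_algebra.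
From mathcomp Require Import Rstruct complex.
From mathcomp Require Import ring zify.
Import GRing.Theory Num.Theory.
Set Implicit Arguments. Unset Strict Implicit. Unset Printing Implicit Defensive.
Local Open Scope ring_scope.

(* Both determinants [M_i(v_j)] and [Mt_i(u_j)] factor through [Z(u_i,v_j)].
   For distinct nonzero y_1..y_N put Q_k = prod_(l <> k) (y_k - y_l).  Since
   w |-> sum_k y_k^m / Q_k * prod_(l <> k) (1 - w y_l) - w^(N-1-m) has degree
   < N and vanishes at the N points w = 1/y_j, we get for 0 <= m < N
     (PF)  sum_k y_k^m / (Q_k (1 - w y_k)) = w^(N-1-m) / prod_l (1 - w y_l).
   Decomposing Z(y,x) into partial fractions in y and applying (PF) yields
     M_(i+1)(v)  = xi0^(2i+1-N) sum_k u_k^i / Q_k(u) Z(u_k,v) prod_l (1 - q v u_l),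
     Mt_(i+1)(u) =              sum_k v_k^i / Q_k(v) Z(u,v_k) prod_l (1 - q u v_l),
   i.e. [M_i(v_j)] = D V(u) diag(1/Q(u)) [Z(u_k,v_j)] diag(prod_l (1 - q v_j u_l))
   with D diagonal of determinant 1 and V(u) a Vandermonde matrix; similarly for
   Mt with Z transposed.  Since det V(u) / prod_k Q_k(u) = 1 / vandprod u, taking
   determinants gives both equalities. *)

Section PartialFractions.

Variables (F : fieldType) (N : nat) (y : 'I_N -> F).
Hypotheses (hy : injective y) (hy0 : forall k, y k != 0).

Definition lagrange_denom (k : 'I_N) : F := \prod_(l < N | l != k) (y k - y l).

Lemma lagrange_denom_neq0 k : lagrange_denom k != 0.
Proof.
apply/prodf_neq0 => l hlk; rewrite subr_eq0; apply/eqP => /hy ekl.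
by rewrite ekl eqxx in hlk.
Qed.

Lemma card_other_indices (k : 'I_N) : #|[pred l : 'I_N | l != k]| = N.-1.
Proof. by rewrite -[in RHS](card_ord N) -(cardC1 k); apply: eq_card. Qed.

Definition one_minus_X (a : F) : {poly F} := (- a)%:P * 'X + 1%:P.

Lemma size_one_minus_X a : a != 0 -> size (one_minus_X a) = 2%N.
Proof.
move=> a0; rewrite size_MXaddC polyC_eq0 oppr_eq0 (negbTE a0) /=.
by rewrite size_polyC oppr_eq0 a0.
Qed.

Lemma horner_one_minus_X a w : (one_minus_X a).[w] = 1 - w * a.
Proof. by rewrite /one_minus_X !hornerE; ring. Qed.

(* Lagrange interpolation of w^(N-1-m) at the nodes 1/y_j. *)
Lemma lagrange_power_identity m w : (m < N)%N ->
  \sum_(k < N) y k ^+ m / lagrange_denom k * \prod_(l < N | l != k) (1 - w * y l)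
  = w ^+ (N.-1 - m).
Proof.
move=> ltmN.
set P := \sum_(k < N) (y k ^+ m / lagrange_denom k) *:
           \prod_(l < N | l != k) one_minus_X (y l) - 'X^(N.-1 - m).
have sizeP : (size P <= N)%N.
  apply: leq_trans (size_polyD _ _) _; rewrite geq_max size_polyN size_polyXn.
  apply/andP; split; last by lia.
  apply: leq_trans (size_sum _ _ _) _; apply/bigmax_leqP => k _.
  apply: leq_trans (size_scale_leq _ _) _.
  rewrite size_prod => [|l _]; last by rewrite -size_poly_eq0 size_one_minus_X.
  under eq_bigr do rewrite size_one_minus_X //.
  by rewrite sum_nat_const card_other_indices; lia.
have rootP j : root P (y j)^-1.
  rewrite /root /P hornerD hornerN hornerXn horner_sum (bigD1 j) //=.
  rewrite [X in _ + X - _]big1 => [|k hkj]; last first.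
    rewrite hornerZ horner_prod (bigD1 j) 1?eq_sym //= horner_one_minus_X.
    by rewrite mulVf ?hy0 // subrr mul0r mulr0.
  rewrite addr0 hornerZ horner_prod.
  under eq_bigr => l _ do
    rewrite horner_one_minus_X -[1](mulfV (hy0 j)) [_^-1 * _]mulrC -mulrBl.
  rewrite big_split /= -/(lagrange_denom j) prodr_const card_other_indices.
  set n := (N.-1 - m)%N; have -> : N.-1 = (n + m)%N by rewrite /n; lia.
  rewrite exprD !exprVn subr_eq0; apply/eqP.
  have := lagrange_denom_neq0 j; have := hy0 j.
  by move=> yj0 Qj0; field; rewrite Qj0 !expf_neq0.
have P0 : P = 0.
  apply: (@roots_geq_poly_eq0 _ P [seq (y k)^-1 | k <- enum 'I_N]).
  - by apply/allP => x /mapP [j _ ->].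
  - by rewrite map_inj_uniq ?enum_uniq // => a b /invr_inj /hy.
  - by rewrite size_map size_enum_ord.
move/(congr1 (horner^~ w)): P0.
rewrite /P hornerD hornerN hornerXn horner0 horner_sum => /eqP.
rewrite subr_eq0 => /eqP <-; apply: eq_bigr => k _.
rewrite hornerZ horner_prod; congr (_ * _).
by apply: eq_bigr => l _; rewrite horner_one_minus_X.
Qed.

Definition moment_ratio (m : nat) (w : F) : F :=
  w ^+ (N.-1 - m) / \prod_(l < N) (1 - w * y l).

Lemma partial_fraction_moment m w : (m < N)%N -> (forall l, 1 - w * y l != 0) ->
  \sum_(k < N) y k ^+ m / (lagrange_denom k * (1 - w * y k)) = moment_ratio m w.
Proof.
move=> ltmN hw; rewrite /moment_ratio -(lagrange_power_identity w ltmN) mulr_suml.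
apply: eq_bigr => k _; rewrite [\prod_(l < N) _](bigD1 k) //=.
have := lagrange_denom_neq0 k; have := hw k.
have : \prod_(l < N | l != k) (1 - w * y l) != 0 by apply/prodf_neq0.
by move=> ? ? ?; field; apply/and3P.
Qed.

(* Weighted row sums of the kernel
     (al (1 - y x) + (1 - q)(1 - c y) G) / ((1 - y x)(1 - q y x)),
   obtained termwise from its partial fraction decomposition in y and (PF). *)
Lemma kernel_moment_sum m (al c G q x : F) : (m < N)%N -> x != 0 ->
  (forall l, 1 - x * y l != 0) -> (forall l, 1 - q * x * y l != 0) ->
  \sum_(k < N) y k ^+ m / lagrange_denom k *
     ((al * (1 - y k * x) + (1 - q) * (1 - c * y k) * G)
        / ((1 - y k * x) * (1 - q * y k * x)))
  = al * moment_ratio m (q * x)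
    + G * ((1 - c / x) * moment_ratio m x - (q - c / x) * moment_ratio m (q * x)).
Proof.
move=> ltmN x0 h1 h2.
rewrite -!(partial_fraction_moment ltmN) // mulrBr !mulr_sumr -!sumrB -big_split /=.
apply: eq_bigr => k _.
have := lagrange_denom_neq0 k; have := h1 k; have := h2 k.
have e1 : 1 - y k * x != 0 by rewrite mulrC.
have e2 : 1 - q * y k * x != 0 by rewrite mulrAC.
by move=> ? ? ?; field; apply/and4P.
Qed.

End PartialFractions.

Lemma prod_lagrange_denom N (y : 'I_N -> C) :
  \prod_(k < N) lagrange_denom y k
  = vandprod y * \prod_(i < N) \prod_(j < N | (i < j)%N) (y j - y i).
Proof.
rewrite /lagrange_denom /vandprod.
under eq_bigr => k _ do rewrite (bigID (fun l : 'I_N => (k < l)%N)) /=.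
rewrite big_split /= [X in _ * X](exchange_big_dep predT) //=.
congr (_ * _); apply: eq_bigr => k _; apply: eq_bigl => l; rewrite -val_eqE /=.
  by case: ltngtP.
by case: ltngtP.
Qed.

Lemma vandprod_neq0 N (y : 'I_N -> C) : injective y -> vandprod y != 0.
Proof.
move=> hy; have : \prod_(k < N) lagrange_denom y k != 0.
  by apply/prodf_neq0 => k _; apply: lagrange_denom_neq0.
by rewrite prod_lagrange_denom mulf_eq0 negb_or => /andP [].
Qed.

(* If E_ij = s_i sum_k y_k^i / Q_k Z_kj p_j, then E = diag(s) V(y) diag(1/Q) Z diag(p),
   whence its determinant. *)
Lemma det_vandermonde_factor N (y : 'I_N -> C) (E : 'M[C]_N) (Z : 'I_N -> 'I_N -> C)
    (s p : 'I_N -> C) :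
  injective y ->
  (forall i j, E i j = s i * \sum_(k < N) y k ^+ i / lagrange_denom y k * (Z k j * p j)) ->
  \det E = (\prod_(i < N) s i) * \det (\matrix_(k, j) Z k j) * (\prod_(j < N) p j)
           / vandprod y.
Proof.
move=> hy hE.
have -> : E = diag_mx (\row_i s i) *m
                (Vandermonde N (\row_k y k) *m diag_mx (\row_k (lagrange_denom y k)^-1))
              *m ((\matrix_(k, j) Z k j) *m diag_mx (\row_j p j)).
  apply/matrixP => i j; rewrite hE mul_diag_mx !mul_mx_diag !mxE mulr_sumr.
  by apply: eq_bigr => k _; rewrite !mxE mulrA.
rewrite !det_mulmx !det_diag det_Vandermonde.
under eq_bigr do rewrite mxE.
under [X in _ * (_ * X) * _]eq_bigr do rewrite mxE.
under [X in _ * (_ * X)]eq_bigr do rewrite mxE.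
under [X in _ * (X * _) * _]eq_bigr do under eq_bigr do rewrite !mxE.
have := vandprod_neq0 hy; have : \prod_(k < N) lagrange_denom y k != 0.
  by apply/prodf_neq0 => k _; apply: lagrange_denom_neq0.
rewrite prodfV prod_lagrange_denom mulf_eq0 negb_or => /andP [_ hD] hV.
by field; rewrite hD hV.
Qed.

(* Integer powers with exponent a - b, turned into a quotient of natural powers so
   that the row identities below become rational identities handled by field. *)
Lemma expfz_natB (x : C) (a b : nat) : x != 0 -> x ^ ((a : int) - (b : int)) = x ^+ a / x ^+ b.
Proof. by move=> x0; rewrite expfzDr // -exprnN. Qed.

(* Row i0 + 1 of M as a combination of the rows of Z: expand Z(u_k, v) with
   kernel_moment_sum (c = xi s0, G = 1 - s0 v / xi); what remains is a rational
   identity in v, xi, q^(N-i0-1) and the two products over l. *)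
Lemma Mfun_row N (q g s0 xi : C) (u : 'I_N -> C) (v : C) (i0 : nat) :
  injective u -> (forall k, u k != 0) -> g != 0 -> xi != 0 -> v != 0 ->
  (forall l, 1 - v * u l != 0) -> (forall l, 1 - q * v * u l != 0) -> (i0 < N)%N ->
  Mfun q g s0 xi u i0.+1 v = xi ^+ (2 * i0 + 1) / xi ^+ N *
    \sum_(k < N) u k ^+ i0 / lagrange_denom u k *
       (Zfun q g s0 xi (u k) v * \prod_(l < N) (1 - q * v * u l)).
Proof.
move=> hu hu0 g0 xi0 v0 h1 h2 lti0N.
under eq_bigr do rewrite mulrA.
rewrite -mulr_suml /Zfun (kernel_moment_sum hu hu0 _ _ _ lti0N v0 h1 h2).
rewrite /moment_ratio /Mfun prodf_div.
have [n eN] : exists n, N = (i0 + n + 1)%N by exists (N - i0.+1)%N; lia.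
have -> : (2 * (i0.+1 : int) - (N : int) = ((2 * i0 + 2)%N : int) - (N : int))%R by lia.
have -> : ((N : int) - (i0.+1 : int) - 1 = (N : int) - ((i0 + 2)%N : int))%R by lia.
rewrite !expfz_natB //.
have -> : (N.-1 - i0 = n)%N by lia.
have -> : (N - i0.+1 = n)%N by lia.
have -> : v ^+ N = v ^+ n * v ^+ i0 * v by rewrite eN addn1 exprS exprD; ring.
have -> : (2 * i0 + 2 = (2 * i0 + 1).+1)%N by lia.
rewrite addn2 !exprS exprMn.
have : \prod_(l < N) (1 - q * v * u l) != 0 by apply/prodf_neq0.
have : \prod_(l < N) (1 - v * u l) != 0 by apply/prodf_neq0.
have : xi ^+ N != 0 by rewrite expf_neq0.
have : v ^+ i0 != 0 by rewrite expf_neq0.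
move: (\prod_(l < N) _) (\prod_(l < N) _) (xi ^+ N) (v ^+ i0) => A B X V hV hX hB hA.
by field; rewrite hA hB hX hV v0 xi0 g0.
Qed.

(* Row i0 + 1 of Mt as a combination of the columns of Z: by the symmetry of Z,
   Z(u, v_k) is the kernel in v_k with c = s0 / xi and G = 1 - xi s0 u. *)
Lemma Mtfun_row N (q g s0 xi : C) (v : 'I_N -> C) (u : C) (i0 : nat) :
  injective v -> (forall k, v k != 0) -> g != 0 -> xi != 0 -> u != 0 ->
  (forall l, 1 - u * v l != 0) -> (forall l, 1 - q * u * v l != 0) -> (i0 < N)%N ->
  Mtfun q g s0 xi v i0.+1 u =
    \sum_(k < N) v k ^+ i0 / lagrange_denom v k *
       (Zfun q g s0 xi u (v k) * \prod_(l < N) (1 - q * u * v l)).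
Proof.
move=> hv hv0 g0 xi0 u0 h1 h2 lti0N.
under eq_bigr do rewrite mulrA.
rewrite -mulr_suml.
have Zswap k : Zfun q g s0 xi u (v k) =
  ((1 - g) * (q - g^-1 * s0 ^+ 2) * (1 - v k * u)
   + (1 - q) * (1 - (xi^-1 * s0) * v k) * (1 - xi * s0 * u))
  / ((1 - v k * u) * (1 - q * v k * u)).
  by rewrite /Zfun; congr (_ / _); ring.
under eq_bigr do rewrite Zswap.
rewrite (kernel_moment_sum hv hv0 _ _ _ lti0N u0 h1 h2) /moment_ratio /Mtfun prodf_div.
have [n eN] : exists n, N = (i0 + n + 1)%N by exists (N - i0.+1)%N; lia.
have -> : ((N : int) - (i0.+1 : int) - 1 = (N : int) - ((i0 + 2)%N : int))%R by lia.
rewrite !expfz_natB //.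
have -> : (N.-1 - i0 = n)%N by lia.
have -> : (N - i0.+1 = n)%N by lia.
have -> : u ^+ N = u ^+ n * u ^+ i0 * u by rewrite eN addn1 exprS exprD; ring.
rewrite addn2 !exprS exprMn.
have : \prod_(l < N) (1 - q * u * v l) != 0 by apply/prodf_neq0.
have : \prod_(l < N) (1 - u * v l) != 0 by apply/prodf_neq0.
have : u ^+ i0 != 0 by rewrite expf_neq0.
move: (\prod_(l < N) _) (\prod_(l < N) _) (u ^+ i0) => A B V hV hB hA.
by field; rewrite hA hB hV u0 xi0 g0.
Qed.

(* The row scalings xi^(2i+1-N) of M multiply to 1, as sum_(i<N) (2i+1) = N^2. *)
Lemma prod_row_scalings N (xi : C) : xi != 0 ->
  \prod_(i < N) (xi ^+ (2 * i + 1) / xi ^+ N) = 1.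
Proof.
move=> xi0; have sum_odd : (\sum_(i < N) (2 * i + 1) = N * N)%N.
  by elim: N => [|n IH]; rewrite ?big_ord0 // big_ord_recr /= IH; lia.
rewrite prodf_div prodrXr prodr_const sum_odd card_ord -exprM.
by rewrite divff // expf_neq0.
Qed.

Theorem theorem4p1 (N : nat) (q gamma s0 xi0 : C) (u v : 'I_N -> C)
  (hN : (1 <= N)%N)
  (hgamma : gamma != 0) (hxi0 : xi0 != 0)
  (hu0 : forall i, u i != 0) (hv0 : forall j, v j != 0)
  (hu : injective u) (hv : injective v)
  (huv : forall i j, 1 - u i * v j != 0)
  (hquv : forall i j, 1 - q * u i * v j != 0) :
  (\prod_(i < N) \prod_(j < N) (1 - q * u i * v j)) / (vandprod u * vandprod v)
    * \det (\matrix_(i < N, j < N) Zfun q gamma s0 xi0 (u i) (v j))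
  = \det (\matrix_(i < N, j < N) Mfun q gamma s0 xi0 u i.+1 (v j)) / vandprod v
  /\
  \det (\matrix_(i < N, j < N) Mfun q gamma s0 xi0 u i.+1 (v j)) / vandprod v
  = \det (\matrix_(i < N, j < N) Mtfun q gamma s0 xi0 v i.+1 (u j)) / vandprod u.
Proof.
set Z := \matrix_(i < N, j < N) Zfun q gamma s0 xi0 (u i) (v j).
set P := \prod_(i < N) \prod_(j < N) (1 - q * u i * v j).
have detM : \det (\matrix_(i < N, j < N) Mfun q gamma s0 xi0 u i.+1 (v j))
    = (\prod_(i < N) (xi0 ^+ (2 * i + 1) / xi0 ^+ N)) * \det Z
      * \prod_(j < N) \prod_(l < N) (1 - q * v j * u l) / vandprod u.
  apply: det_vandermonde_factor => // i j; rewrite !mxE.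
  apply: Mfun_row => // l; first by rewrite mulrC.
  by rewrite mulrAC.
have detMt : \det (\matrix_(i < N, j < N) Mtfun q gamma s0 xi0 v i.+1 (u j))
    = (\prod_(i < N) (1 : C)) * \det Z^T * P / vandprod v.
  have -> : Z^T = \matrix_(k, j) Zfun q gamma s0 xi0 (u j) (v k).
    by apply/matrixP => k j; rewrite !mxE.
  apply: det_vandermonde_factor => // i j; rewrite !mxE mul1r.
  exact: Mtfun_row.
have eP : \prod_(j < N) \prod_(l < N) (1 - q * v j * u l) = P.
  rewrite /P exchange_big; apply: eq_bigr => i _; apply: eq_bigr => j _.
  by rewrite mulrAC.
rewrite detM detMt prod_row_scalings // eP big1_eq det_tr.
have := vandprod_neq0 hu; have := vandprod_neq0 hv.
by move=> hVv hVu; split; field; rewrite hVu hVv.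
Qed.
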